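(* Let $n\ge4$ and $\lambda=(n-2,2)$, and let $m=\lfloor (n-1)/2\rfloor$. Then $P(\lambda)\setminus\{0\}$, the poset on the elements $\{1,2,\dots,n-2\}$, is as follows: its minimal elements are $\{1,2,\dots,m\}$, its maximal elements are $\{m+1,\dots,n-2\}$, and its cover relations are exactly that for each $j$ with $1\le j\le n-2-m$, the maximal element $m+j$ covers each of $j,j+1,\dots,m$ (and there are no other strict relations).
   Context: For a vector $\lambda=(\lambda_1,\dots,\lambda_d)$ of positive integers with sum $n\ge2$, let $\Delta_\lambda=\mathrm{conv}(e_1,\dots,e_d,\lambda)\subset\mathbb{R}^d$ with fundamental parallelepiped $\Pi_\lambda=\{\sum_{i=1}^d\gamma_i(1,e_i)+\gamma_{d+1}(1,\lambda):0\le\gamma_i<1\}\subset\mathbb{R}^{d+1}$. The poset $P(\lambda)$ is $\Pi_\lambda\cap\mathbb{Z}^{d+1}$ ordered by $\sigma\preceq\mu$ iff $\mu-\sigma\in\Pi_\lambda\cap\mathbb{Z}^{d+1}$; $0$ is its minimum. For $0\le b<n-1$ set $p(b)=\left(\sum_{t}\lceil b\lambda_t/(n-1)\rceil-b,\ \lceil b\lambda_1/(n-1)\rceil,\dots,\lceil b\lambda_d/(n-1)\rceil\right)$; $b\mapsto p(b)$ is a bijection from $\{0,\dots,n-2\}$ onto $\Pi_\lambda\cap\mathbb{Z}^{d+1}$, and each integer $b$ is identified with $p(b)$ (so $0$ corresponds to the origin). *)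

From mathcomp Require Import all_boot all_order all_algebra.
Unset Printing Implicit Defensive.
Import Order.TTheory GRing.Theory Num.Theory.

(* lambda = (lambda_1,...,lambda_d) is a seq nat of size d; n = sumn lambda.
   Points of R^{d+1} (resp. Z^{d+1}) are indexed by 'I_d.+1: coordinate 0 is the
   "1"-coordinate, coordinate k>0 is the k-th coordinate of R^d. *)

(* k-th coordinate of the i-th generator of the fundamental parallelepiped:
   generators i < d are (1, e_{i+1}); generator i = d is (1, lambda). *)
Definition gen (lam : seq nat) (i k : nat) : nat :=
  if k == 0%N then 1%N
  else if i == size lam then nth 0%N lam k.-1
  else nat_of_bool (i == k.-1).

(* v is in the half-open fundamental parallelepiped Pi_lambda
   (coefficients gamma taken rational; the generators are linearly independent
   and rational, so for integer v these are the only possible coefficients). *)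
Definition inPi (lam : seq nat) (v : 'I_(size lam).+1 -> int) : Prop :=
  exists g : 'I_(size lam).+1 -> rat,
    (forall i, (0 <= g i < 1)%R) /\
    forall k : 'I_(size lam).+1,
      ((v k)%:~R = \sum_(i < (size lam).+1) g i * (gen lam i k)%:R)%R.

Definition Ple (lam : seq nat) (s mu : 'I_(size lam).+1 -> int) : Prop :=
  inPi lam (fun k => (mu k - s k)%R).

Definition cdiv (x y : nat) : nat := (x + y.-1) %/ y.

Definition pvec (lam : seq nat) (b : nat) : 'I_(size lam).+1 -> int :=
  fun k =>
    if val k == 0%N then
      ((\sum_(t < size lam) cdiv (b * nth 0%N lam t) (sumn lam).-1)%:Z - b%:Z)%R
    else ((cdiv (b * nth 0%N lam (val k).-1) (sumn lam).-1)%:Z)%R.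

Definition ble (lam : seq nat) (a b : nat) : Prop := Ple lam (pvec lam a) (pvec lam b).

(* For lambda = (n-2, 2) one computes p(b) = (c_b, b, c_b) with
   c_b = ceil(2b/(n-1)), which is 1 for b <= m and 2 for b > m.  The coordinates
   of p(b) - p(a) in the generators of Pi_lambda are t, c_b - c_a - 2t and t,
   where t = (b-a)/(n-1).  Hence a < b in P(lambda) exactly when c_a = 1,
   c_b = 2 and 2(b-a) <= n-1, i.e. a <= m < b <= a + m.  Every strict relation
   thus goes from {1..m} to {m+1..n-2}, so there are no chains of length two
   and the cover relations are all the strict relations. *)

From mathcomp Require Import all_boot all_order all_algebra.
From mathcomp Require Import zify ring.
Import Order.TTheory GRing.Theory Num.Theory.
Local Open Scope ring_scope.

Lemma unit_itv_divz (R : numFieldType) (y : int) (N : nat) : (0 < N)%N ->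
  (0 <= (y%:~R / N%:R : R) < 1) = (0 <= y < N).
Proof.
move=> N_gt0; have N_gt0' : 0 < N%:R :> R by rewrite ltr0n.
by rewrite ler_pdivlMr // ltr_pdivrMr // mul0r mul1r ler0z (ltr_int R y N).
Qed.

Lemma eq_inPi {lam : seq nat} {v w : 'I_(size lam).+1 -> int} :
  v =1 w -> inPi lam v <-> inPi lam w.
Proof.
move=> vw; split=> -[g [hg hk]]; exists g; split=> // k.
  by rewrite -vw.
by rewrite vw.
Qed.

(* The coordinates of x in the generators (1,e_1), (1,e_2), (1,l1,l2) are
   (N x1 - l1 s, N x2 - l2 s, s) / N. *)
Lemma inPi2P (l1 l2 : nat) (x0 x1 x2 : int) : (1 < l1 + l2)%N ->
  let N := (l1 + l2).-1 in let s := x1 + x2 - x0 in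
  inPi [:: l1; l2] (fun k => [:: x0; x1; x2]`_k) <->
  [/\ 0 <= s < N, 0 <= N%:Z * x1 - l1%:Z * s < N & 0 <= N%:Z * x2 - l2%:Z * s < N].
Proof.
move=> l_gt1 N s; have N_gt0 : (0 < N)%N by rewrite /N; lia.
have NE : N%:R = l1%:R + l2%:R - 1 :> rat.
  by rewrite /N -natrD -subn1 natrB //; lia.
have NK (y : int) (g : rat) : y%:~R = N%:R * g -> g = y%:~R / N%:R.
  by move=> ->; rewrite [N%:R * g]mulrC mulfK // pnatr_eq0 -lt0n.
rewrite -!(unit_itv_divz rat) //; split.
- move=> [g [hg hk]].
  move: (hk ord0) (hk (lift ord0 ord0)) (hk ord_max).
  rewrite !big_ord_recl !big_ord0 /= /gen /=.
  set g0 := g ord0; set g1 := g (lift _ _); set g2 := g (lift _ (lift _ _)).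
  move=> e0 e1 e2.
  have hs : s%:~R = N%:R * g2.
    by rewrite /s !rmorphB !rmorphD /= e0 e1 e2 NE; ring.
  have h1 : (N%:Z * x1 - l1%:Z * s)%:~R = N%:R * g0.
    by rewrite !rmorphB !rmorphM /= hs e1; ring.
  have h2 : (N%:Z * x2 - l2%:Z * s)%:~R = N%:R * g1.
    by rewrite !rmorphB !rmorphM /= hs e2; ring.
  by rewrite -(NK _ _ hs) -(NK _ _ h1) -(NK _ _ h2); split; apply: hg.
- move=> [hs h1 h2].
  exists (fun i => [:: (N%:Z * x1 - l1%:Z * s)%:~R / N%:R;
                      (N%:Z * x2 - l2%:Z * s)%:~R / N%:R; s%:~R / N%:R]`_i).
  split=> [[[|[|[|i]]] ?] //|k].
  have N_neq0 : N%:R != 0 :> rat by rewrite pnatr_eq0 -lt0n.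
  rewrite !big_ord_recl !big_ord0 /= /gen /=.
  have NZ : (N%:Z)%:~R = N%:R :> rat by [].
  case: k => [[|[|[|k]]] ?] //=; rewrite /s !rmorphB !rmorphM !rmorphD /= NZ NE;
    by field; rewrite -NE.
Qed.

Lemma cdiv_unique (x y q : nat) : (0 < y)%N ->
  (q * y < x + y)%N -> (x <= q * y)%N -> cdiv x y = q.
Proof.
move=> y_gt0 lt_qy le_xqy; rewrite /cdiv.
have -> : (x + y.-1 = q * y + (x + y.-1 - q * y))%N by lia.
by rewrite divnMDl // divn_small //; lia.
Qed.

Lemma pvec_two_part (n b : nat) : (4 <= n)%N -> (1 <= b <= n - 2)%N ->
  pvec [:: n - 2; 2]%N b =1
  (fun k => [:: if (2 * b <= n - 1)%N then 1 else 2; b%:Z;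
                if (2 * b <= n - 1)%N then 1 else 2]`_k).
Proof.
move=> n_ge4 b_range k; rewrite /pvec /=.
have -> : (n - 2 + (2 + 0)).-1 = (n - 1)%N by lia.
have c1 : cdiv (b * (n - 2)) (n - 1) = b by apply: cdiv_unique; nia.
have c2 : cdiv (b * 2) (n - 1) = if (2 * b <= n - 1)%N then 1%N else 2%N.
  by case: ifP => ?; apply: cdiv_unique; lia.
case: k => [[|[|[|k]]] ?] //=; rewrite ?big_ord_recr ?big_ord0 /= ?c1 ?c2;
  case: (leqP (2 * b) (n - 1)) => _ /=; lia.
Qed.

Lemma ble_two_part (n a b : nat) : (4 <= n)%N ->
  (1 <= a <= n - 2)%N -> (1 <= b <= n - 2)%N ->
  ble [:: n - 2; 2]%N a b <->
  a = b \/ (a <= (n - 1) %/ 2)%N /\ ((n - 1) %/ 2 < b <= a + (n - 1) %/ 2)%N.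
Proof.
move=> n_ge4 a_range b_range; rewrite /ble /Ple.
set ca : int := if (2 * a <= n - 1)%N then 1 else 2.
set cb : int := if (2 * b <= n - 1)%N then 1 else 2.
have pvecB : (fun k => pvec [:: n - 2; 2]%N b k - pvec [:: n - 2; 2]%N a k) =1
             (fun k => [:: cb - ca; b%:Z - a%:Z; cb - ca]`_k).
  by move=> k; rewrite !pvec_two_part //; case: k => [[|[|[|k]]] ?].
rewrite (eq_inPi pvecB) inPi2P /=; last by lia.
have -> : ((n - 2 + 2).-1 = n - 1)%N by lia.
have N_diff : (n - 1)%:Z - (n - 2)%:Z = 1 by lia.
rewrite addrK -mulrBl N_diff mul1r.
rewrite /ca /cb.
case: (leqP (2 * a) (n - 1)) => a_half; case: (leqP (2 * b) (n - 1)) => b_half.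
all: split => [[] | ?]; [lia | split; lia].
Qed.

Local Close Scope ring_scope.

Section CoversFromStrictOrder.

Variables (n : nat) (R : nat -> nat -> Prop).
Hypothesis n_ge4 : 4 <= n.

Local Notation m := ((n - 1) %/ 2).
Local Notation inP b := (1 <= b <= n - 2).
Local Notation rises_to a b :=
  (exists j, 1 <= j <= n - 2 - m /\ b = m + j /\ j <= a <= m).

Hypothesis RE : forall a b, inP a -> inP b ->
  R a b <-> a = b \/ a <= m /\ m < b <= a + m.

Lemma strict_iff {a b} : inP a -> inP b -> a != b -> R a b <-> rises_to a b.
Proof.
move=> ha hb /eqP a_neq_b; rewrite RE //; split.
- by case=> [//|?]; exists (b - m); lia.
- by case=> j ?; right; lia.
Qed.

Lemma minimal_iff b : inP b -> (forall a, inP a -> a != b -> ~ R a b) <-> b <= m.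
Proof.
move=> hb; split=> [no_below | b_le_m a ha /eqP a_neq_b].
- rewrite leqNgt; apply/negP => m_lt_b.
  by apply: (no_below m); [lia | apply/eqP; lia | apply/RE; [lia | | right]; lia].
- by rewrite RE //; lia.
Qed.

Lemma maximal_iff b : inP b -> (forall a, inP a -> a != b -> ~ R b a) <-> m < b.
Proof.
move=> hb; split=> [no_above | m_lt_b a ha /eqP a_neq_b].
- rewrite ltnNge; apply/negP => b_le_m.
  by apply: (no_above m.+1); [lia | apply/eqP; lia | apply/RE; [| lia | right]; lia].
- by rewrite RE //; lia.
Qed.

Lemma cover_iff a b : inP a -> inP b ->
  (a != b /\ R a b /\ ~ (exists c, inP c /\ c != a /\ c != b /\ R a c /\ R c b))
  <-> rises_to a b.
Proof.
move=> ha hb; split.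
- by case=> a_neq_b [Rab _]; apply/(strict_iff ha hb a_neq_b).
- move=> rise; have a_neq_b : a != b by case: rise => j ?; apply/eqP; lia.
  split=> //; split; first exact/(strict_iff ha hb a_neq_b).
  case=> c [hc [/eqP c_neq_a [/eqP c_neq_b []]]].
  by rewrite !RE //; lia.
Qed.

End CoversFromStrictOrder.

Theorem proposition2p15 (n : nat) (hn : (4 <= n)%N) :
  let lam := [:: n - 2; 2]%N in
  let m := ((n - 1) %/ 2)%N in
  let inP (b : nat) := (1 <= b <= n - 2)%N in
  (* minimal elements of P(lambda) \ {0} *)
  (forall b, inP b ->
     ((forall a, inP a -> a != b -> ~ ble lam a b) <-> (b <= m)%N)) /\
  (* maximal elements of P(lambda) \ {0} *)
  (forall b, inP b ->
     ((forall a, inP a -> a != b -> ~ ble lam b a) <-> (m < b)%N)) /\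
  (* cover relations: b covers a iff b = m + j with 1 <= j <= n-2-m and j <= a <= m *)
  (forall a b, inP a -> inP b ->
     ((a != b /\ ble lam a b /\
       ~ (exists c, inP c /\ c != a /\ c != b /\ ble lam a c /\ ble lam c b))
      <-> (exists j, (1 <= j <= n - 2 - m)%N /\ b = (m + j)%N /\ (j <= a <= m)%N))) /\
  (* no other strict relations *)
  (forall a b, inP a -> inP b -> a != b ->
     (ble lam a b <->
      (exists j, (1 <= j <= n - 2 - m)%N /\ b = (m + j)%N /\ (j <= a <= m)%N))).
Proof.
move=> lam m inP; have bleE := fun a b => @ble_two_part n a b hn.
split; [|split; [|split]].
- exact: minimal_iff.
- exact: maximal_iff.
- exact: cover_iff.
- exact: strict_iff.
Qed.
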